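(* Let $p>2$ be a prime and let $a,b\in\mathbb{C}_p$ with $a\neq0$, $b\neq0$, $a\neq b$ and $|2a|_p>|b|_p$. Let $P=-\frac1b$, $D=\mathbb{C}_p\setminus\{P\}$, $f(x)=\frac{ax^2}{bx+1}$ on $D$, $x_1=0$, $x_2=\frac1{a-b}$, and $r_1=\frac{1}{|a|_p}$. Then $x_1$ is an attracting fixed point and $x_2$ is an indifferent fixed point of $f$, and $$A(x_1)=B_{r_1}(x_1),\qquad SI(x_2)=B_{r_1}(x_2).$$
   Context: $\mathbb{C}_p$ is the field of complex $p$-adic numbers with $p$-adic norm $|\cdot|_p$. For $c\in\mathbb{C}_p$, $r>0$: $B_r(c)=\{x:|x-c|_p<r\}$, $S_r(c)=\{x:|x-c|_p=r\}$. For $y\in D$, $y^{(n)}=f^n(y)$ is the $n$-th iterate (defined as long as no earlier iterate equals $P$). A fixed point $x^{(0)}$ of $f$ is attracting if $|f'(x^{(0)})|_p<1$ and indifferent if $|f'(x^{(0)})|_p=1$. Its basin of attraction is $A(x^{(0)})=\{y: y^{(n)}\text{ defined for all }n,\ y^{(n)}\to x^{(0)}\}$. A ball $B_r(x^{(0)})$ contained in $D$ is a Siegel disk of $x^{(0)}$ if every sphere $S_\rho(x^{(0)})$ with $\rho<r$ is invariant, i.e. $x\in S_\rho(x^{(0)})$ implies $x^{(n)}\in S_\rho(x^{(0)})$ for all $n\ge1$; the maximal Siegel disk $SI(x^{(0)})$ is the union of all Siegel disks centered at $x^{(0)}$. *)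

(* C_p is not available in the libraries; we model it as an
   abstract algebraically closed field K with a complete, non-archimedean
   absolute value extending the p-adic absolute value (|p| = 1/p). *)
From HB Require Import structures.
From mathcomp Require Import all_boot all_order all_algebra.
From mathcomp Require Import reals.
Set Implicit Arguments. Unset Strict Implicit. Unset Printing Implicit Defensive.
Import Order.TTheory GRing.Theory Num.Theory.
Local Open Scope ring_scope.

Section Defs.
Variables (R : realType) (K : fieldType) (abs : K -> R).

Definition abs_cvg (u : nat -> K) (l : K) : Prop :=
  forall eps : R, 0 < eps -> exists N : nat, forall n, (N <= n)%N -> abs (u n - l) < eps.

Definition abs_cauchy (u : nat -> K) : Prop :=
  forall eps : R, 0 < eps -> exists N : nat, forall m n, (N <= m)%N -> (N <= n)%N ->
    abs (u m - u n) < eps.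

Record padic_abs (p : nat) : Prop := {
  abs_ge0 : forall x, 0 <= abs x;
  abs_eq0 : forall x, abs x = 0 <-> x = 0;
  absM : forall x y, abs (x * y) = abs x * abs y;
  abs_ultra : forall x y, abs (x + y) <= Num.max (abs x) (abs y);
  abs_p : abs (p%:R) = (p%:R)^-1;
  abs_complete : forall u, abs_cauchy u -> exists l, abs_cvg u l
}.

Definition abs_derive (f : K -> K) (x d : K) : Prop :=
  forall eps : R, 0 < eps -> exists delta : R, 0 < delta /\
    forall h, 0 < abs h -> abs h < delta -> abs ((f (x + h) - f x) / h - d) < eps.

Variables (P : K) (f : K -> K).

Definition step (y : option K) : option K :=
  match y with
  | Some x => if x == P then None else Some (f x)
  | None => None
  end.

(* iterate n y = Some (y^(n)) when defined, None otherwise *)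
Definition iterate (n : nat) (y : K) : option K := iter n step (Some y).

Definition is_fixed (x : K) : Prop := x <> P /\ f x = x.

Definition attracting (x : K) : Prop :=
  is_fixed x /\ exists d, abs_derive f x d /\ abs d < 1.

Definition indifferent (x : K) : Prop :=
  is_fixed x /\ exists d, abs_derive f x d /\ abs d = 1.

Definition basin (x0 : K) : K -> Prop := fun y =>
  exists u : nat -> K, (forall n, iterate n y = Some (u n)) /\ abs_cvg u x0.

Definition siegel_disk (x0 : K) (r : R) : Prop :=
  0 < r /\ (forall x, abs (x - x0) < r -> x <> P) /\
  forall rho : R, rho < r -> forall x, abs (x - x0) = rho ->
    forall n, (1 <= n)%N -> exists y, iterate n x = Some y /\ abs (y - x0) = rho.

Definition max_siegel (x0 : K) : K -> Prop := fun y =>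
  exists r : R, siegel_disk x0 r /\ abs (y - x0) < r.

End Defs.

(* Put s(x) = |a| |x|.  Since |b| < |a|, the ultrametric inequality gives |b x + 1| = 1
   whenever s(x) < 1, so there s(f x) = s(x)^2 and orbits tend to 0 doubly exponentially;
   whenever s(x) >= 1, |b x + 1| <= s(x) and hence s(f x) >= s(x), so orbits stay away from 0.
   Near x2 = 1/(a - b) one has f x - x2 = (x - x2) (a x + 1) / (b x + 1), and both factors
   have absolute value 1 as long as |x - x2| < 1/|a| (as |2 a - b| = |a| because p is odd),
   so each smaller sphere about x2 is invariant.  The sphere of radius 1/|a| is not: it
   contains -1/a, which f maps to x2. *)

From HB Require Import structures.
From mathcomp Require Import all_boot all_order all_algebra.
From mathcomp Require Import reals topology normedtype sequences.
From mathcomp Require Import ring lra.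
Import Order.TTheory GRing.Theory Num.Theory numFieldNormedType.Exports.
Set Implicit Arguments. Unset Strict Implicit.
Local Open Scope ring_scope.

Section AbsoluteValue.
Variables (R : realType) (K : fieldType) (abs : K -> R) (p : nat).
Hypothesis habs : padic_abs abs p.

Lemma abs0 : abs 0 = 0.
Proof. exact/(abs_eq0 habs). Qed.

Lemma abs_neq0 x : (abs x != 0) = (x != 0).
Proof. by congr negb; apply/eqP/eqP => [/(abs_eq0 habs)|->]; last exact: abs0. Qed.

Lemma abs_gt0 x : (0 < abs x) = (x != 0).
Proof. by rewrite lt_def abs_neq0 (abs_ge0 habs) andbT. Qed.

Lemma abs1 : abs 1 = 1.
Proof.
have abs1_neq0 : abs 1 != 0 by rewrite abs_neq0 oner_neq0.
by apply: (mulfI abs1_neq0); rewrite -(absM habs) !mulr1.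
Qed.

Lemma absN x : abs (- x) = abs x.
Proof.
have absN1 : abs (-1) = 1.
  have := absM habs (-1) (-1); rewrite mulrNN mulr1 abs1.
  have := abs_ge0 habs (-1); nra.
by rewrite -mulN1r (absM habs) absN1 mul1r.
Qed.

Lemma absV x : abs x^-1 = (abs x)^-1.
Proof.
have [->|x0] := eqVneq x 0; first by rewrite invr0 abs0 invr0.
have absx_neq0 : abs x != 0 by rewrite abs_neq0.
by apply: (mulfI absx_neq0); rewrite -(absM habs) !mulfV ?abs1.
Qed.

Lemma absD_dominant x y : abs x < abs y -> abs (x + y) = abs y.
Proof.
move=> lt_xy; apply/eqP; rewrite eq_le; apply/andP; split.
  by rewrite (le_trans (abs_ultra habs x y)) // ge_max lexx ltW.
have := abs_ultra habs (x + y) (- x); rewrite addrAC subrr add0r absN le_max.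
by case/orP=> // /(lt_le_trans lt_xy); rewrite ltxx.
Qed.

Lemma abs_natr_le1 n : abs n%:R <= 1.
Proof.
elim: n => [|n IH]; first by rewrite abs0 ler01.
by rewrite -natr1 (le_trans (abs_ultra habs _ _)) // ge_max IH abs1 lexx.
Qed.

(* Write 1 = p - 2 k: since |p| < 1, the term 2 k must have absolute value 1. *)
Lemma abs2 : prime p -> (2 < p)%N -> abs 2 = 1.
Proof.
move=> p_prime p_gt2.
have p_odd : odd p by case/even_prime: p_prime => // p2; rewrite p2 in p_gt2.
have one_eq : 1 = p%:R - 2 * (p./2)%:R :> K.
  by rewrite -{1}(odd_double_half p) p_odd natrD -mul2n natrM addrK.
have absp_lt1 : abs p%:R < 1.
  by rewrite (abs_p habs) invf_lt1 ?ltr0n ?prime_gt0 // ltr1n prime_gt1.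
have := abs_ultra habs p%:R (- (2 * (p./2)%:R)); rewrite -one_eq abs1 absN le_max.
case/orP=> [/(lt_le_trans absp_lt1)|]; first by rewrite ltxx.
rewrite (absM habs) => le1; apply/eqP; rewrite eq_le abs_natr_le1 /=.
apply: le_trans le1 _; rewrite -[leRHS]mulr1 ler_wpM2l ?(abs_ge0 habs) //.
exact: abs_natr_le1.
Qed.

Lemma abs_affine_unit c x0 x :
  abs (c * x0 + 1) = 1 -> abs (c * (x - x0)) < 1 -> abs (c * x + 1) = 1.
Proof.
move=> unit_x0 small; have -> : c * x + 1 = c * (x - x0) + (c * x0 + 1) by ring.
by rewrite absD_dominant unit_x0.
Qed.

End AbsoluteValue.

Section Criteria.
Variables (R : realType) (K : fieldType) (abs : K -> R).

Lemma abs_cvg_geometric (u : nat -> K) l (C q : R) :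
  0 < C -> 0 <= q -> q < 1 -> (forall n, abs (u n - l) <= C * q ^+ n) ->
  abs_cvg abs u l.
Proof.
move=> C_gt0 q_ge0 q_lt1 le_u eps eps_gt0.
have absq_lt1 : `|q| < 1 by rewrite ger0_norm.
have [N _ small_q] := cvgr_dist_lt _ _ (cvg_expr absq_lt1) _ (divr_gt0 eps_gt0 C_gt0).
exists N => n /small_q /=; rewrite sub0r normrN ger0_norm ?exprn_ge0 // => qn_lt.
by rewrite (le_lt_trans (le_u n)) // mulrC -ltr_pdivlMr.
Qed.

Lemma abs_derive_linear_bound (f : K -> K) x d (C r : R) : 0 < C -> 0 < r ->
  (forall h, 0 < abs h -> abs h < r -> abs ((f (x + h) - f x) / h - d) <= C * abs h) ->
  abs_derive abs f x d.
Proof.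
move=> C_gt0 r_gt0 le_quot eps eps_gt0; exists (Num.min r (eps / C)).
split=> [|h h_gt0]; first by rewrite lt_min r_gt0 divr_gt0.
rewrite lt_min => /andP[h_lt_r h_lt_eps]; rewrite (le_lt_trans (le_quot h h_gt0 h_lt_r)) //.
by rewrite mulrC -ltr_pdivlMr.
Qed.

End Criteria.

Section Orbits.
Variables (K : fieldType) (P : K) (f : K -> K).

Lemma iterate_invariant (Q : K -> Prop) y :
  Q y -> (forall x, Q x -> x != P /\ Q (f x)) ->
  forall n, iterate P f n y = Some (iter n f y) /\ Q (iter n f y).
Proof.
move=> Qy Q_inv; elim=> [|n [iter_n Q_n]] //.
have [n_not_P Q_fn] := Q_inv _ Q_n.
by rewrite /iterate iterS -/(iterate P f n y) iter_n /= (negbTE n_not_P).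
Qed.

Lemma iterate_orbit y (u : nat -> K) :
  (forall n, iterate P f n y = Some (u n)) ->
  u 0%N = y /\ forall n, u n != P /\ u n.+1 = f (u n).
Proof.
move=> u_iter; split=> [|n]; first by case: (u_iter 0%N).
have := u_iter n.+1; rewrite /iterate iterS -/(iterate P f n y) u_iter /=.
by case: eqP => // _ [<-].
Qed.

End Orbits.

Section RationalMap.
Variables (R : realType) (K : fieldType) (abs : K -> R) (p : nat).
Hypothesis habs : padic_abs abs p.
Variables (a b : K).
Hypotheses (a_neq0 : a != 0) (b_neq0 : b != 0).
Hypotheses (abs2 : abs 2 = 1) (abs_b_lt_a : abs b < abs a).

Local Notation P := (- b^-1).
Local Notation f := (fun x : K => a * x ^+ 2 / (b * x + 1)).
Local Notation x2 := ((a - b)^-1).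
Local Notation r1 := ((abs a)^-1).

Let absM := absM habs.
Let abs_ge0 := abs_ge0 habs.

Lemma abs_a_gt0 : 0 < abs a.
Proof. by rewrite (abs_gt0 habs). Qed.

Lemma r1_gt0 : 0 < r1.
Proof. by rewrite invr_gt0 abs_a_gt0. Qed.

Lemma lt_r1 z : (abs z < r1) = (abs a * abs z < 1).
Proof. by rewrite -[r1]mul1r ltr_pdivlMr ?abs_a_gt0 // mulrC. Qed.

Lemma eq_pole x : (x == P) = (b * x + 1 == 0).
Proof.
rewrite -subr_eq0 -(mulrI_eq0 _ (mulfI b_neq0)) mulrBr mulrN mulfV //.
by rewrite opprK.
Qed.

Lemma den_unit_neq_pole x : abs (b * x + 1) = 1 -> x != P.
Proof.
by rewrite eq_pole -(abs_neq0 habs) => ->; rewrite oner_neq0.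
Qed.

Lemma abs_den_small x : abs a * abs x < 1 -> abs (b * x + 1) = 1.
Proof.
move=> small; apply: (abs_affine_unit habs (x0 := 0)).
  by rewrite mulr0 add0r (abs1 habs).
by rewrite subr0 absM (le_lt_trans _ small) // ler_wpM2r // ltW.
Qed.

Lemma abs_map_small x : abs a * abs x < 1 -> abs a * abs (f x) = (abs a * abs x) ^+ 2.
Proof.
by move=> small; rewrite /= expr2 !absM (absV habs) abs_den_small // invr1 mulr1; ring.
Qed.

Lemma abs_map_large x :
  x != P -> 1 <= abs a * abs x -> abs a * abs x <= abs a * abs (f x).
Proof.
move=> x_not_P large.
have den_gt0 : 0 < abs (b * x + 1) by rewrite (abs_gt0 habs) -eq_pole.
have den_le : abs (b * x + 1) <= abs a * abs x.
  rewrite (le_trans (abs_ultra habs _ _)) // ge_max (abs1 habs) large absM andbT.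
  by rewrite ler_wpM2r // ltW.
have -> : abs a * abs (f x) = abs a * abs x * (abs a * abs x / abs (b * x + 1)).
  by rewrite /= expr2 !absM (absV habs); ring.
by rewrite ler_peMr ?mulr_ge0 // ler_pdivlMr // mul1r.
Qed.

Lemma attracting0 : attracting abs P f 0.
Proof.
split; first split.
- by apply/eqP; rewrite eq_pole mulr0 add0r oner_eq0.
- by rewrite /= expr2 mul0r mulr0 mul0r.
exists 0; split; last by rewrite (abs0 habs) ltr01.
apply: (abs_derive_linear_bound (C := abs a) (r := r1)) => [||h h_gt0];
  rewrite ?abs_a_gt0 ?r1_gt0 //.
rewrite lt_r1 => small; have den_unit := abs_den_small small.
have h_neq0 : h != 0 by rewrite -(abs_gt0 habs).
have den_neq0 : b * h + 1 != 0 by rewrite -(abs_neq0 habs) den_unit oner_neq0.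
have -> : (f (0 + h) - f 0) / h - 0 = a * h / (b * h + 1).
  by rewrite /= add0r; field; rewrite den_neq0 h_neq0 oner_eq0.
by rewrite !absM (absV habs) den_unit invr1 mulr1.
Qed.

Lemma abs_a_sub_b : abs (a - b) = abs a.
Proof. by rewrite addrC (absD_dominant habs) // (absN habs). Qed.

Lemma abs_2a_sub_b : abs (2 * a - b) = abs a.
Proof. by rewrite addrC (absD_dominant habs) absM abs2 mul1r // (absN habs). Qed.

Lemma a_sub_b_neq0 : a - b != 0.
Proof. by rewrite -(abs_neq0 habs) abs_a_sub_b (abs_neq0 habs). Qed.

Lemma abs_den_x2 : abs (b * x2 + 1) = 1.
Proof.
have -> : b * x2 + 1 = a / (a - b) by field; rewrite a_sub_b_neq0.
by rewrite absM (absV habs) abs_a_sub_b mulfV // (abs_neq0 habs).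
Qed.

Lemma abs_num_x2 : abs (a * x2 + 1) = 1.
Proof.
have -> : a * x2 + 1 = (2 * a - b) / (a - b) by field; rewrite a_sub_b_neq0.
by rewrite absM (absV habs) abs_a_sub_b abs_2a_sub_b mulfV // (abs_neq0 habs).
Qed.

Lemma map_x2 : f x2 = x2.
Proof. by rewrite /=; field; rewrite a_sub_b_neq0 addrCA subrr addr0 a_neq0. Qed.

Lemma abs_map_near_x2 x : abs a * abs (x - x2) < 1 ->
  abs (b * x + 1) = 1 /\ abs (f x - x2) = abs (x - x2).
Proof.
move=> near; have near_c c : abs c <= abs a -> abs (c * (x - x2)) < 1.
  by move=> le_ca; rewrite absM (le_lt_trans _ near) // ler_wpM2r.
have den_unit := abs_affine_unit habs abs_den_x2 (near_c b (ltW abs_b_lt_a)).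
have num_unit := abs_affine_unit habs abs_num_x2 (near_c a (lexx _)).
have den_neq0 : b * x + 1 != 0 by rewrite -(abs_neq0 habs) den_unit oner_neq0.
split=> //; have -> : f x - x2 = (x - x2) * (a * x + 1) / (b * x + 1).
  by rewrite /=; field; rewrite den_neq0 a_sub_b_neq0.
by rewrite !absM (absV habs) num_unit den_unit invr1 !mulr1.
Qed.

Lemma indifferent_x2 : indifferent abs P f x2.
Proof.
split; first split; [exact/eqP/den_unit_neq_pole/abs_den_x2 | exact: map_x2|].
exists ((2 * a - b) / a); split; last first.
  by rewrite absM (absV habs) abs_2a_sub_b mulfV // (abs_neq0 habs).
apply: (abs_derive_linear_bound (C := abs a) (r := r1)) => [||h h_gt0];
  rewrite ?abs_a_gt0 ?r1_gt0 //.
rewrite lt_r1 => small.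
have near : abs a * abs (x2 + h - x2) < 1 by rewrite addrAC subrr add0r.
have [den_unit _] := abs_map_near_x2 near.
have h_neq0 : h != 0 by rewrite -(abs_gt0 habs).
have den_neq0 : b * (x2 + h) + 1 != 0 by rewrite -(abs_neq0 habs) den_unit oner_neq0.
have -> : (f (x2 + h) - f x2) / h - (2 * a - b) / a =
    (a - b) ^+ 2 * h / (a * (b * (x2 + h) + 1)).
  have cleared_den : b * (1 + h * (a - b)) + (a - b) = (a - b) * (b * (x2 + h) + 1).
    by field; rewrite a_sub_b_neq0.
  rewrite map_x2 /=; field.
  by rewrite cleared_den mulf_eq0 negb_or a_sub_b_neq0 den_neq0 a_neq0 h_neq0.
rewrite expr2 !absM (absV habs) absM den_unit abs_a_sub_b mulr1.
by rewrite le_eqVlt; apply/orP; left; apply/eqP; field; rewrite (abs_neq0 habs).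
Qed.

Lemma basin0_lt_r1 y : basin abs P f 0 y -> abs y < r1.
Proof.
case=> u [u_iter u_cvg]; have [u0 u_step] := iterate_orbit u_iter.
rewrite lt_r1 ltNge; apply/negP => large.
have u_large n : 1 <= abs a * abs (u n).
  elim: n => [|n IH]; first by rewrite u0.
  have [un_not_P ->] := u_step n.
  exact: le_trans IH (abs_map_large un_not_P IH).
have [N close] := u_cvg r1 r1_gt0.
by have := close N (leqnn N); rewrite subr0 lt_r1 ltNge u_large.
Qed.

Lemma lt_r1_basin0 y : abs y < r1 -> basin abs P f 0 y.
Proof.
rewrite lt_r1 => small; set q := abs a * abs y.
have small_inv x : abs a * abs x < 1 -> x != P /\ abs a * abs (f x) < 1.
  move=> small_x; split; first exact/den_unit_neq_pole/abs_den_small.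
  by rewrite abs_map_small // expr_lt1 // mulr_ge0.
have orbit := iterate_invariant (Q := fun x => abs a * abs x < 1) small small_inv.
exists (fun n => iter n f y); split=> [n|]; first by case: (orbit n).
have abs_iter n : abs a * abs (iter n f y) = q ^+ (2 ^ n).
  elim: n => [|n IH]; first by rewrite expr1.
  by rewrite iterS abs_map_small ?(orbit n).2 // IH -exprM expnSr.
apply: (abs_cvg_geometric (C := r1) (q := q)); rewrite ?r1_gt0 ?mulr_ge0 //.
move=> n; rewrite subr0 -[abs _]mul1r -(mulVf (lt0r_neq0 abs_a_gt0)) -mulrA abs_iter.
rewrite ler_wpM2l ?(ltW r1_gt0) // ler_wiXn2l ?mulr_ge0 ?(ltW small) //.
exact/ltnW/ltn_expl.
Qed.

Lemma siegel_disk_x2 : siegel_disk abs P f x2 r1.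
Proof.
have sphere_inv rho x : abs (x - x2) = rho -> rho < r1 -> x != P /\ abs (f x - x2) = rho.
  move=> <-; rewrite lt_r1 => near; have [den_unit ->] := abs_map_near_x2 near.
  by split=> //; exact: den_unit_neq_pole.
split; first exact: r1_gt0.
split=> [x near|rho lt_rho x on_sphere n _]; first exact/eqP/(sphere_inv _ x erefl near).1.
have [iter_n sphere_n] := iterate_invariant (Q := fun z => abs (z - x2) = rho)
  on_sphere (fun z on_z => sphere_inv rho z on_z lt_rho) n.
by exists (iter n f x).
Qed.

Lemma siegel_disk_x2_le r : siegel_disk abs P f x2 r -> r <= r1.
Proof.
case=> _ [_ sphere_inv]; rewrite leNgt; apply/negP => lt_r.
set z := - a^-1.
have z_sphere : abs (z - x2) = r1.
  have -> : z - x2 = - (2 * a - b) / (a * (a - b)).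
    by rewrite /z; field; rewrite a_sub_b_neq0 a_neq0.
  rewrite absM (absN habs) (absV habs) absM abs_2a_sub_b abs_a_sub_b invfM mulrA.
  by rewrite mulfV ?mul1r // (abs_neq0 habs).
have z_not_P : z != P.
  have den_z : b * z + 1 = (a - b) / a by rewrite /z; field.
  by rewrite eq_pole den_z mulf_eq0 invr_eq0 negb_or a_sub_b_neq0 a_neq0.
have fz : f z = x2 by rewrite /z /=; field; rewrite a_sub_b_neq0 a_neq0.
have [y [iter1 abs_y]] := sphere_inv r1 lt_r z z_sphere 1%N (leqnn 1).
move: iter1; rewrite /iterate /= (negbTE z_not_P) fz => -[y_x2].
by move: r1_gt0; rewrite -abs_y -y_x2 subrr (abs0 habs) ltxx.
Qed.

Lemma basin0E y : basin abs P f 0 y <-> abs y < r1.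
Proof. by split; [exact: basin0_lt_r1 | exact: lt_r1_basin0]. Qed.

Lemma max_siegel_x2E y : max_siegel abs P f x2 y <-> abs (y - x2) < r1.
Proof.
split=> [[r [disk near]] | near]; first exact: lt_le_trans near (siegel_disk_x2_le disk).
by exists r1; split; first exact: siegel_disk_x2.
Qed.

End RationalMap.

Theorem theorem3p6 (R : realType) (K : closedFieldType) (abs : K -> R) (p : nat)
  (hp : prime p) (hp2 : (2 < p)%N) (habs : padic_abs abs p)
  (a b : K) (ha : a != 0) (hb : b != 0) (hab : a != b)
  (hba : abs b < abs (2 * a)) :
  let P := - b^-1 in
  let f := fun x : K => a * x ^+ 2 / (b * x + 1) in
  let x1 : K := 0 in
  let x2 : K := (a - b)^-1 in
  let r1 : R := (abs a)^-1 in
  attracting abs P f x1 /\ indifferent abs P f x2 /\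
  (forall y, basin abs P f x1 y <-> abs (y - x1) < r1) /\
  (forall y, max_siegel abs P f x2 y <-> abs (y - x2) < r1).
Proof.
move=> P f x1 x2 r1.
have abs2 := abs2 habs hp hp2.
have abs_b_lt_a : abs b < abs a by rewrite (absM habs) abs2 mul1r in hba.
split; first exact: (attracting0 habs ha hb abs_b_lt_a).
split; first exact: (indifferent_x2 habs ha hb abs2 abs_b_lt_a).
split=> y; first by rewrite subr0; exact: (basin0E habs ha hb abs_b_lt_a).
exact: (max_siegel_x2E habs ha hb abs2 abs_b_lt_a).
Qed.
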